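(* Let $(Z,d)$ be an infinite compact metric space and $\psi:Z\to Z$ an expansive homeomorphism. Then there exist a compact zero-dimensional Hausdorff space $\mathcal P$, a homeomorphism $\sigma:\mathcal P\to\mathcal P$ and a continuous surjection $\pi:\mathcal P\to Z$ with $\pi\circ\sigma=\psi\circ\pi$, such that $\pi$ is injective on a dense $G_\delta$-subset of $\mathcal P$ (i.e. the set of $p\in\mathcal P$ with $\pi^{-1}(\pi(p))=\{p\}$ is a dense $G_\delta$), and such that $\mathcal P$ is a Cantor space whenever $Z$ has no isolated points.
   Context: A homeomorphism $\psi$ of a compact metric space $(Z,d)$ is expansive if there is $\varepsilon_Z>0$ such that $d(\psi^n(x),\psi^n(y))\le\varepsilon_Z$ for all $n\in\mathbb Z$ implies $x=y$. *)

From HB Require Import structures.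
From mathcomp Require Import all_boot all_order all_algebra.
From mathcomp Require Import all_classical all_reals all_analysis borel_hierarchy cantor.
Set Implicit Arguments. Unset Strict Implicit. Unset Printing Implicit Defensive.
Import Order.TTheory GRing.Theory Num.Theory.
Local Open Scope classical_set_scope.
Local Open Scope ring_scope.

Definition is_metric_of {R : realType} (Z : topologicalType) (d : Z -> Z -> R) :=
  [/\ forall x y, 0 <= d x y,
      forall x y, d x y = 0 <-> x = y,
      forall x y, d x y = d y x,
      forall x y z, d x z <= d x y + d y z &
      forall (x : Z) (A : set Z),
        nbhs x A <-> exists2 e : R, 0 < e & [set y | d x y < e] `<=` A].

Definition homeo_pair (X Y : topologicalType) (f : X -> Y) (g : Y -> X) :=
  [/\ cancel f g, cancel g f, continuous f & continuous g].

Definition iter_int {T : Type} (f g : T -> T) (n : int) (x : T) : T :=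
  match n with
  | Posz k => iter k f x
  | Negz k => iter k.+1 g x
  end.

Definition expansive {R : realType} {Z : Type} (d : Z -> Z -> R)
  (psi psi_inv : Z -> Z) :=
  exists2 eps : R, 0 < eps &
    forall x y, (forall n : int,
       d (iter_int psi psi_inv n x) (iter_int psi psi_inv n y) <= eps) -> x = y.

Definition is_cantor_space (P : topologicalType) :=
  exists (f : P -> cantor_space) (g : cantor_space -> P), homeo_pair f g.

From HB Require Import structures.
From mathcomp Require Import all_boot all_order all_algebra.
From mathcomp Require Import all_classical all_reals all_analysis borel_hierarchy cantor.
From mathcomp Require Import lra.
Import Order.TTheory GRing.Theory Num.Theory.
Local Open Scope classical_set_scope.
Local Open Scope ring_scope.

(* Take a countable family of regular open sets O_k that separates points and
   is permuted by pulling back along psi (pullbacks, along all iterates of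
   psi, of interiors of closed balls of radius 1/(m+1) centred on finite
   nets).  By Baire, the points lying on no boundary of an O_k form a dense
   G_delta set G.  Code a point by its bits [z \in O_k]; P is the closure in
   the Cantor cube bool^K of the codes of points of G, sigma is the induced
   shift of coordinates, and pi sends a limit of codes of points z_n -> z of
   G to z.  Since the O_k are regular open, a point on a boundary of O_k is a
   limit of codes with either value of bit k, so pi is injective exactly over
   G. *)

(** * Homeomorphisms and regular open sets *)

Lemma homeo_pair_sym {X Y : topologicalType} {f : X -> Y} {g : Y -> X} :
  homeo_pair f g -> homeo_pair g f.
Proof. by case=> fK gK cf cg; split. Qed.

Lemma homeo_pair_iter {X : topologicalType} (f g : X -> X) k :
  homeo_pair f g -> homeo_pair (iter k f) (iter k g).
Proof.
move=> [fK gK cf cg]; split.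
- by elim: k => // k IH x; rewrite iterSr iterS fK IH.
- by elim: k => // k IH x; rewrite iterSr iterS gK IH.
- elim: k => [|k IH] x /=; first exact: cvg_id.
  exact: (continuous_comp (IH x) (cf _)).
- elim: k => [|k IH] x /=; first exact: cvg_id.
  exact: (continuous_comp (IH x) (cg _)).
Qed.

Lemma homeo_pair_iter_int {X : topologicalType} (f g : X -> X) n :
  homeo_pair f g -> homeo_pair (iter_int f g n) (iter_int g f n).
Proof.
by case: n => k fg /=; apply: homeo_pair_iter => //; exact: homeo_pair_sym.
Qed.

Lemma iter_int_add1 {T : Type} (f g : T -> T) : cancel f g ->
  forall n x, iter_int f g (n + 1) x = iter_int f g n (f x).
Proof.
move=> fK [k|[|k]] x.
- by rewrite -PoszD addn1 /= -iterS iterSr.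
- by rewrite /= fK.
- have -> : Negz k.+1 + 1 = Negz k.
    by rewrite !NegzE (_ : k.+2 = k.+1 + 1)%N ?PoszD ?opprD ?subrK // addn1.
  by rewrite /iter_int [in RHS]iterSr fK.
Qed.

Lemma homeo_preimage_closure {X Y : topologicalType}
    {h : X -> Y} {g : Y -> X} :
  homeo_pair h g -> forall A, h @^-1` closure A = closure (h @^-1` A).
Proof.
move=> [hK gK ch cg] A; apply/seteqP; split => x /=.
- move=> clA B nB.
  have nB' : nbhs (h x) (g @^-1` B) by apply: cg; rewrite hK.
  have [y [Ay By]] := clA _ nB'.
  by exists (g y); split => //=; rewrite gK.
- move=> clA B nB.
  have [y [Ay By]] := clA _ (ch x B nB).
  by exists (h y).
Qed.

Lemma homeo_preimage_interior {X Y : topologicalType}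
    {h : X -> Y} {g : Y -> X} :
  homeo_pair h g -> forall A, h @^-1` A° = (h @^-1` A)°.
Proof.
move=> hg A; apply: setC_inj.
rewrite preimage_setC -!closure_setC preimage_setC.
exact: homeo_preimage_closure hg _.
Qed.

Lemma regopen_homeo_preimage {X Y : topologicalType} {h : X -> Y} {g : Y -> X}
    {A : set Y} :
  homeo_pair h g -> regopen A -> regopen (h @^-1` A).
Proof.
move=> hg; rewrite /regopen.
by rewrite -(homeo_preimage_closure hg) -(homeo_preimage_interior hg) => ->.
Qed.

Lemma regopen_open {T : topologicalType} (A : set T) : regopen A -> open A.
Proof. by move=> <-; exact: open_interior. Qed.

Lemma regopen_closure_setC {T : topologicalType} (A : set T) :
  regopen A -> closure (~` closure A) = ~` A.
Proof. by move=> rA; rewrite closure_setC rA. Qed.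

Lemma image_closure_subset {X Y : topologicalType} {f : X -> Y} {A : set X} :
  continuous f -> f @` closure A `<=` closure (f @` A).
Proof.
move=> cf _ [x clx <-] B nB.
have [y [Ay By]] := clx _ (cf x B nB).
by exists (f y); split => //; exists y.
Qed.

(** * Compactness and the Baire property *)

Lemma compact_directed_cluster {T : topologicalType} {I : Type} (D : set I)
    (A : I -> set T) :
  compact [set: T] -> D !=set0 ->
  (forall i j, D i -> D j -> exists2 k, D k & A k `<=` A i `&` A j) ->
  (forall i, D i -> A i !=set0) ->
  exists z, forall i, D i -> closure (A i) z.
Proof.
move=> cT D0 dirA A0.
have FF : ProperFilter (filter_from D A).
  split; last exact: filter_from_filter.
  by move=> [i Di Ai0]; have [x Aix] := A0 i Di; exact: Ai0 x Aix.
have [z [_ clz]] := cT _ FF (@filterT _ _ _).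
by exists z => i Di B zB; apply: (clz _ _ _ zB); exists i.
Qed.

Lemma compact_filter_cluster {T : topologicalType} {I : Type}
    (F : set_system I) {FF : Filter F} (A : set I -> set T) :
  compact [set: T] -> (forall N M, N `<=` M -> A N `<=` A M) ->
  (forall N, F N -> A N !=set0) ->
  exists z, forall N, F N -> closure (A N) z.
Proof.
move=> cT Amono A0; apply: compact_directed_cluster => //.
  by exists setT; exact: filterT.
move=> N M FN FM; exists (N `&` M); first exact: filterI.
by rewrite subsetI; split; apply: Amono; [exact: subIsetl | exact: subIsetr].
Qed.

Lemma compact_hausdorff_shrink {T : topologicalType} {E V : set T} :
  compact [set: T] -> hausdorff_space T -> closed E -> E° = set0 ->
  open V -> V !=set0 ->
  exists2 W : set T, open W /\ W !=set0 & closure W `<=` V `&` ~` E.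
Proof.
move=> cT hT cE iE oV [v Vv].
have [x VEx] : V `&` ~` E !=set0.
  apply: contrapT => VE0.
  have VE : V `<=` E.
    by move=> y Vy; apply: contrapT => nEy; apply: VE0; exists y.
  by have := interiorS VE; rewrite iE (interior_id V).1 // => /(_ v Vv).
have oVE : open (V `&` ~` E) by apply: openI => //; exact: closed_openC.
have [W nW clW] := compact_regular hT cT (@filterT _ (nbhs x) _)
  (open_nbhs_nbhs (conj oVE VEx)).
exists W°; first by split; [exact: open_interior | exists x; exact: nW].
exact: subset_trans (closureS (@interior_subset _ W)) clW.
Qed.

Lemma compact_hausdorff_Baire {T : topologicalType} (E : nat -> set T) :
  compact [set: T] -> hausdorff_space T ->
  (forall n, closed (E n)) -> (forall n, (E n)° = set0) ->
  dense (\bigcap_n ~` E n).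
Proof.
move=> cT hT cE iE U U0 oU.
have /choice[shrink shrinkP] : forall nV : nat * set T, exists W : set T,
    open nV.2 /\ nV.2 !=set0 ->
    [/\ open W, W !=set0 & closure W `<=` nV.2 `&` ~` E nV.1].
  move=> [n V]; have [[oV V0]|] := pselect (open V /\ V !=set0); last first.
    by exists V.
  have [W [oW W0] clW] := compact_hausdorff_shrink cT hT (cE n) (iE n) oV V0.
  by exists W.
pose fix W n := if n is m.+1 then shrink (m, W m) else U.
have WP n : open (W n) /\ W n !=set0.
  by elim: n => [|n [oW W0]] //=; have [] := shrinkP (n, W n) (conj oW W0).
have clW n : closure (W n.+1) `<=` W n `&` ~` E n.
  by have [] := shrinkP (n, W n) (WP n).
have W_nonincr i j : (i <= j)%N -> W j `<=` W i.
  elim: j => [|j IH]; first by rewrite leqn0 => /eqP ->.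
  rewrite leq_eqVlt => /predU1P[->//|/IH]; apply: subset_trans.
  by move=> z /subset_closure/clW[].
have W_directed i j : setT i -> setT j ->
    exists2 k, setT k & W k `<=` W i `&` W j.
  move=> _ _; exists (maxn i j) => //; rewrite subsetI.
  by split; apply: W_nonincr; [exact: leq_maxl | exact: leq_maxr].
have [z clWz] := compact_directed_cluster setT W cT (ex_intro _ 0%N I)
  W_directed (fun n _ => (WP n).2).
exists z; split; first exact: (clW 0%N z (clWz 1%N I)).1.
by move=> n _; exact: (clW n z (clWz n.+1 I)).2.
Qed.

(** * The Cantor cube and its subspaces *)

Section bool_cube.
Context {I : choiceType}.
Local Notation cube := (prod_topology (fun _ : I => bool)).

Lemma nbhs_coord_eq (b : cube) i : nbhs b [set c : cube | c i = b i].
Proof.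
exact: (@proj_continuous I (fun _ => bool) i b [set b i] (discrete_set1 (b i))).
Qed.

Lemma cvg_coordwise {X : Type} (F : set_system X) {FF : Filter F}
    (f : X -> cube) (b : cube) :
  (forall i, \forall x \near F, f x i = b i) -> f @ F --> b.
Proof.
move=> fb.
have := @cvg_sup cube _
  (fun i => Topological.class (initial_topology (fun f : cube => f i)))
  (f @ F) b.
move=> /(_ _)/iffRL; apply => i A /=.
rewrite (@nbhsE (initial_topology (fun f : cube => f i))).
move=> -[B [[C oC CB] Bb] BA].
rewrite nbhs_filterE; apply: filterS BA _.
apply: filterS (fb i) => x /= fx; rewrite -CB /= fx.
by rewrite -CB in Bb.
Qed.

Lemma cube_compact : compact [set: cube].
Proof.
have := @tychonoff _ (fun _ : I => bool) _ (fun=> bool_compact).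
by congr (compact _); rewrite eqEsubset.
Qed.

Lemma cube_hausdorff : hausdorff_space cube.
Proof. by apply: hausdorff_product => _; exact: discrete_hausdorff. Qed.

Lemma cube_zero_dimensional : zero_dimensional cube.
Proof. exact: zero_dimension_prod (fun _ => @discrete_zero_dimension bool). Qed.

End bool_cube.

Section set_type_topology.
Context {T : topologicalType} {A : set T}.

Lemma val_continuous : continuous (val : set_type A -> T).
Proof. exact: initial_continuous. Qed.

Lemma set_type_hausdorff : hausdorff_space T -> hausdorff_space (set_type A).
Proof.
move=> hT p q clpq; apply: val_inj; apply: hT => U V nU nV.
have [r [Ur Vr]] := clpq _ _ (val_continuous p _ nU) (val_continuous q _ nV).
by exists (val r).
Qed.

Lemma set_type_zero_dimensional :
  zero_dimensional T -> zero_dimensional (set_type A).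
Proof.
move=> zT p q /eqP npq.
have vpq : val p != val q by apply/eqP => /val_inj.
have [U [clU Up nUq]] := zT _ _ vpq.
exists (val @^-1` U); split => //; apply: preimage_clopen => //.
exact: val_continuous.
Qed.

Lemma set_type_compact : compact A -> compact [set: set_type A].
Proof.
move=> cA F FF FT.
have FF' : ProperFilter (val @ F) by exact: fmap_proper_filter.
have [b [Ab clb]] := cA (val @ F) FF'
  (filterS (fun p _ => set_mem (valP p)) FT).
exists (exist _ b (mem_set Ab)); split => // Y B FY.
rewrite nbhsE => -[_ [[V oV <-] Vb] VB].
have FvY : (val @ F) (val @` Y).
  by apply: (@filterS _ F _ Y); [move=> y Yy; exists y | exact: FY].
have [_ [[y Yy <-] Vy]] := clb _ _ FvY (open_nbhs_nbhs (conj oV Vb)).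
by exists y; split => //; apply: VB.
Qed.

End set_type_topology.

Section pointed_cantor.
Context {R : realType} (T : pseudoMetricType R) (t0 : T).

Let pointed_at : Type := T.
HB.instance Definition _ := PseudoMetric.on pointed_at.
HB.instance Definition _ := isPointed.Build pointed_at t0.

Lemma cantor_like_cantor_space : cantor_like T -> is_cantor_space T.
Proof.
move=> cT.
have [f [cf clf]] := @homeomorphism_cantor_like R pointed_at cT.
exists (f^-1 : T -> cantor_space), (f : cantor_space -> T); split.
- by move=> x; rewrite invK ?inE.
- by move=> x; rewrite funK ?inE.
- apply/continuous_closedP => A cA.
  have -> : (f^-1)%FUN @^-1` A = f @` A.
    apply/seteqP; split => x /=.
      by move=> Ax; exists ((f^-1)%FUN x) => //; rewrite invK ?inE.
    by move=> [y Ay <-]; rewrite funK ?inE.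
  exact: clf.
- exact: cf.
Qed.

End pointed_cantor.

(** * Coding points by a family of regular open sets *)

Section coding.
Context {Z : topologicalType} {K : countType} {O : K -> set Z}.
Hypothesis Z_compact : compact [set: Z].
Hypothesis Z_hausdorff : hausdorff_space Z.
Hypothesis O_regopen : forall k, regopen (O k).
Hypothesis O_separates :
  forall z z', z <> z' -> exists k, O k z /\ ~ closure (O k) z'.

Local Notation cube := (prod_topology (fun _ : K => bool)).

Definition coding (z : Z) : cube := fun k => `[< O k z >].
Definition bdry k := closure (O k) `&` ~` O k.
Definition generic := [set z | forall k, ~ bdry k z].
Definition bdry_nat n := if unpickle n is Some k then bdry k else set0.
Definition codes (b : cube) (z : Z) :=
  forall N, nbhs b N -> closure (generic `&` coding @^-1` N) z.
Definition code_closure := closure (coding @` generic).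
Definition code_space := set_type code_closure.

Lemma O_open k : open (O k). Proof. exact: regopen_open. Qed.

Lemma bdry_closed k : closed (bdry k).
Proof.
by apply: closedI; [exact: closed_closure | exact: open_closedC (O_open k)].
Qed.

Lemma bdry_interior k : (bdry k)° = set0.
Proof.
rewrite -subset0 => z bz.
have [clz _] := nbhs_singleton bz.
by have [w [Ow [_]]] := clz _ bz.
Qed.

Lemma bdry_nat_closed n : closed (bdry_nat n).
Proof.
rewrite /bdry_nat; case: unpickle => [k|]; first exact: bdry_closed.
exact: closed0.
Qed.

Lemma generic_bigcap : generic = \bigcap_n ~` bdry_nat n.
Proof.
apply/seteqP; split => z /=.
  by move=> gz n _; rewrite /bdry_nat; case: unpickle => // k; exact: gz.
by move=> bz k; have := bz (pickle k) I; rewrite /bdry_nat pickleK.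
Qed.

Lemma generic_dense : dense generic.
Proof.
rewrite generic_bigcap; apply: compact_hausdorff_Baire => // [n|n].
  exact: bdry_nat_closed.
rewrite /bdry_nat; case: unpickle => [k|]; first exact: bdry_interior.
exact: interior0.
Qed.

Lemma codes_coding {w} : generic w -> codes (coding w) w.
Proof.
move=> gw N nN; apply: subset_closure; split => //.
exact: nbhs_singleton nN.
Qed.

Lemma codes_bit {b z} k : codes b z -> O k z -> b k.
Proof.
move=> bz Okz.
have [w [[_ /= <-] Okw]] :=
  bz _ (nbhs_coord_eq b k) _ (open_nbhs_nbhs (conj (O_open k) Okz)).
by rewrite /coding asboolT.
Qed.

Lemma codes_bit_closure {b z} k : codes b z -> b k -> closure (O k) z.
Proof.
move=> bz bk; apply: closureS (bz _ (nbhs_coord_eq b k)).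
by move=> w [_ /=]; rewrite bk /coding => /asboolP.
Qed.

Lemma codes_unique {b z z'} : codes b z -> codes b z' -> z = z'.
Proof.
move=> bz bz'; apply: contrapT => /O_separates [k [Okz nclOkz']].
exact/nclOkz'/(codes_bit_closure k bz')/(codes_bit k bz).
Qed.

Lemma codes_generic {b z} : generic z -> codes b z -> b = coding z.
Proof.
move=> gz bz; apply: functional_extensionality_dep => k.
have [Okz|nOkz] := pselect (O k z).
  by rewrite (codes_bit k bz Okz) /coding asboolT.
rewrite /coding asboolF //; apply/negbTE/negP => bk.
exact: gz k (conj (codes_bit_closure k bz bk) nOkz).
Qed.

Lemma coding_inj_generic {y w} :
  generic y -> generic w -> coding y = coding w -> y = w.
Proof.
move=> gy gw cyw; apply: (codes_unique _ (codes_coding gw)).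
by rewrite -cyw; exact: codes_coding.
Qed.

Lemma codes_exists {b} : code_closure b -> exists z, codes b z.
Proof.
move=> Ab; rewrite /codes; apply: compact_filter_cluster => //.
  by move=> N M NM w [gw Nw]; split => //; exact: NM.
by move=> N /Ab [_ [[w gw <-] Nw]]; exists w.
Qed.

Lemma codes_code_closure {b z} : codes b z -> code_closure b.
Proof.
move=> bz N nN; have [w [[gw Nw] _]] := bz N nN setT (@filterT _ (nbhs z) _).
by exists (coding w); split => //; exists w.
Qed.

Lemma codes_through {z E} : open E -> closure E z ->
  exists b, codes b z /\ closure (coding @` (generic `&` E)) b.
Proof.
move=> oE clEz.
have [b clb] : exists b : cube,
    forall U, nbhs z U -> closure (coding @` (generic `&` E `&` U)) b.
  apply: compact_filter_cluster; first exact: cube_compact.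
    move=> U U' UU' _ [w [[gw Ew] Uw] <-].
    by exists w => //; split => //; exact: UU'.
  move=> U; rewrite nbhsE => -[U' [oU' U'z] U'U].
  have [w [[Ew U'w] gw]] :=
    generic_dense _ (clEz _ (open_nbhs_nbhs (conj oU' U'z))) (openI oE oU').
  by exists (coding w), w => //; split; [by [] | exact: U'U].
exists b; split.
  move=> N nN B nB.
  have [_ [[w [[gw _] Bw] <-] Nw]] := clb B nB N nN.
  by exists w.
apply: closureS (clb _ (@filterT _ (nbhs z) _)) => _ [w [[gw Ew] _] <-].
by exists w.
Qed.

Lemma codes_near {b z W} : codes b z -> nbhs z W ->
  exists2 N, nbhs b N & generic `&` coding @^-1` N `<=` W.
Proof.
move=> bz zW; apply: contrapT => noN.
have [z' clz'] : exists z', forall N, nbhs b N ->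
    closure (generic `&` coding @^-1` N `&` ~` W) z'.
  apply: compact_filter_cluster => //.
    by move=> N M NM w [[gw Nw] nWw]; split => //; split => //; exact: NM.
  move=> N nN; apply: contrapT => empty; apply: noN; exists N => // w wN.
  by apply: contrapT => nWw; apply: empty; exists w.
have z'z : z' = z.
  apply: (codes_unique _ bz) => N nN.
  exact: closureS (@subIsetl _ _ _) _ (clz' N nN).
rewrite z'z in clz'.
by have [w [[_ nWw] Ww]] := clz' _ (@filterT _ (nbhs b) _) _ zW.
Qed.

Lemma code_closureP (p : code_space) : code_closure (val p).
Proof. exact: set_mem (valP p). Qed.

Definition to_code_space {b} (Ab : code_closure b) : code_space :=
  exist _ b (mem_set Ab).

Definition decode (p : code_space) : Z :=
  projT1 (cid (codes_exists (code_closureP p))).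

Lemma decodeP p : codes (val p) (decode p).
Proof. exact: projT2 (cid (codes_exists (code_closureP p))). Qed.

Lemma decodeE {b z} (Ab : code_closure b) :
  codes b z -> decode (to_code_space Ab) = z.
Proof. exact: codes_unique (decodeP (to_code_space Ab)). Qed.

Lemma decode_continuous : continuous decode.
Proof.
move=> p W nW.
have [W1 nW1 clW1] := compact_regular Z_hausdorff Z_compact
  (@filterT _ (nbhs (decode p)) _) nW.
have [N nN NW1] := codes_near (decodeP p) nW1.
apply: (@filterS _ (nbhs p) _ (val @^-1` N°)).
  by move=> q /= Nq; apply: clW1; exact: closureS NW1 _ (decodeP q N Nq).
exact: val_continuous p _ (nbhs_interior nN).
Qed.

Lemma decode_surj z : exists p, decode p = z.
Proof.
have [b [bz _]] := codes_through openT (subset_closure (I : setT z)).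
by exists (to_code_space (codes_code_closure bz)); exact: decodeE.
Qed.

Lemma code_space_compact : compact [set: code_space].
Proof.
apply: set_type_compact.
exact: subclosed_compact (@closed_closure _ _) cube_compact (fun _ _ => I).
Qed.

Lemma code_space_hausdorff : hausdorff_space code_space.
Proof. exact/set_type_hausdorff/cube_hausdorff. Qed.

Lemma code_space_zero_dimensional : zero_dimensional code_space.
Proof. exact/set_type_zero_dimensional/cube_zero_dimensional. Qed.

(* This is where regular openness is used: every boundary point of O k is
   also adherent to the exterior of O k. *)
Lemma bdry_codes {z k} : bdry k z ->
  exists b b', [/\ codes b z, codes b' z, b k & ~~ b' k].
Proof.
move=> [clz nOz].
have [b [bz clb]] := codes_through (O_open k) clz.
have [b' [b'z clb']] : exists b', codes b' z /\
    closure (coding @` (generic `&` ~` closure (O k))) b'.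
  apply: codes_through; first exact/closed_openC/closed_closure.
  by rewrite regopen_closure_setC.
exists b, b'; split => //.
  have [_ [[w [_ Ow] <-] <-]] := clb _ (nbhs_coord_eq b k).
  by rewrite /coding asboolT.
have [_ [[w [_ nclOw] <-] <-]] := clb' _ (nbhs_coord_eq b' k).
by rewrite /coding asboolF // => Ow; exact/nclOw/subset_closure.
Qed.

Lemma decode_fiber_set1P p :
  decode @^-1` [set decode p] = [set p] <-> generic (decode p).
Proof.
split=> [fib k bk|gp].
  have [b [b' [bz b'z bk1 b'k0]]] := bdry_codes bk.
  have in_fib b'' (b''z : codes b'' (decode p)) : b'' = val p.
    have : (decode @^-1` [set decode p])
        (to_code_space (codes_code_closure b''z)) := decodeE _ b''z.
    by rewrite fib => <-.
  by move: b'k0; rewrite (in_fib _ b'z) -(in_fib _ bz) bk1.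
apply/seteqP; split => q /=; last by move=> ->.
move=> qp; apply: val_inj.
rewrite (codes_generic gp (decodeP p)) -qp.
by apply: codes_generic; [rewrite qp | exact: decodeP].
Qed.

Lemma decode_fiber_set1E :
  [set p : code_space | decode @^-1` [set decode p] = [set p]] =
  decode @^-1` generic.
Proof. by apply/seteqP; split => p /decode_fiber_set1P. Qed.

Lemma decode_preimage_generic_dense : dense (decode @^-1` generic).
Proof.
move=> W [p Wp] oW; case: oW Wp => V oV <- Vp.
have [_ [[w gw <-] Vw]] := code_closureP p V (open_nbhs_nbhs (conj oV Vp)).
exists (to_code_space (codes_code_closure (codes_coding gw))); split => //.
by rewrite /= (decodeE _ (codes_coding gw)).
Qed.

Lemma decode_preimage_generic_Gdelta : Gdelta (decode @^-1` generic).
Proof.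
exists (fun n => decode @^-1` ~` bdry_nat n); last first.
  by rewrite generic_bigcap preimage_bigcap.
move=> n; apply: open_comp; first by move=> x _; exact: decode_continuous.
exact/closed_openC/bdry_nat_closed.
Qed.

Lemma coding_continuous_generic w : generic w -> coding @ w --> coding w.
Proof.
move=> gw; apply: cvg_coordwise => k.
have [Okw|nOkw] := pselect (O k w).
  apply: filterS (open_nbhs_nbhs (conj (O_open k) Okw)) => y Oky.
  by rewrite /coding !asboolT.
have nclOkw : ~ closure (O k) w.
  by move=> clOkw; exact: gw k (conj clOkw nOkw).
have : nbhs w (~` closure (O k)).
  by apply: open_nbhs_nbhs; split; [exact/closed_openC/closed_closure|].
apply: filterS => y nclOky; rewrite /coding !asboolF // => Oky.
exact/nclOky/subset_closure.
Qed.

(* An isolated point of the code space is the code of a single generic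
   point w; as the generic points are dense, w is then isolated in Z. *)
Lemma code_space_perfect :
  (forall z : Z, ~ open [set z]) -> perfect_set [set: code_space].
Proof.
move=> noiso; apply/perfectTP => p [V oV Vp].
have Vp' : V (val p) by have : (val @^-1` V) p by rewrite Vp.
have [_ [[w gw <-] Vw]] := code_closureP p V (open_nbhs_nbhs (conj oV Vp')).
have in_V y : generic y -> V (coding y) -> coding y = val p.
  move=> gy Vy.
  have : (val @^-1` V) (to_code_space (codes_code_closure (codes_coding gy))).
    by [].
  by rewrite Vp => <-.
have only_w y : generic y -> V (coding y) -> y = w.
  move=> gy Vy; apply: (coding_inj_generic gy gw).
  by rewrite (in_V _ gy Vy) in_V.
have nV : nbhs w (coding @^-1` V).
  by apply: coding_continuous_generic => //; exact: open_nbhs_nbhs.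
apply: (noiso w).
suff -> : [set w] = (coding @^-1` V)° by exact: open_interior.
apply/seteqP; split => [y ->|y Vy]; first exact: nV.
apply: contrapT => yw.
have oU : open ((coding @^-1` V)° `&` ~` [set w]).
  apply: openI; first exact: open_interior.
  exact/closed_openC/accessible_closed_set1/hausdorff_accessible.
have [x [[Vx xw] gx]] := generic_dense _ (ex_intro _ y (conj Vy yw)) oU.
by apply: xw; exact: only_w x gx (nbhs_singleton Vx).
Qed.

Definition reindex (t : K -> K) (b : cube) : cube := fun k => b (t k).

Section reindexing.
Context {f g : Z -> Z} {t : K -> K}.
Hypothesis fg : homeo_pair f g.
Hypothesis preimage_O : forall k, f @^-1` O k = O (t k).

Lemma reindex_continuous : continuous (reindex t).
Proof.
by move=> b; apply: cvg_coordwise => k; exact: nbhs_coord_eq b (t k).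
Qed.

Lemma bdry_preimage k : f @^-1` bdry k = bdry (t k).
Proof.
rewrite /bdry preimage_setI (homeo_preimage_closure fg) -preimage_setC.
by rewrite preimage_O.
Qed.

Lemma generic_image z : generic z -> generic (f z).
Proof.
by move=> gz k; change (~ (f @^-1` bdry k) z); rewrite bdry_preimage.
Qed.

Lemma coding_image z : coding (f z) = reindex t (coding z).
Proof.
apply: functional_extensionality_dep => k.
rewrite /coding /reindex; change (O k (f z)) with ((f @^-1` O k) z).
by rewrite preimage_O.
Qed.

Lemma code_closure_reindex {b} : code_closure b -> code_closure (reindex t b).
Proof.
move=> Ab.
have : closure (reindex t @` (coding @` generic)) (reindex t b).
  by apply: (image_closure_subset reindex_continuous); exists b.
apply: closureS => _ [_ [w gw <-] <-]; exists (f w); first exact: generic_image.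
exact: coding_image.
Qed.

Lemma codes_reindex {b z} : codes b z -> codes (reindex t b) (f z).
Proof.
move=> bz N nN.
have [_ _ cf _] := fg.
have : closure (f @` (generic `&` coding @^-1` (reindex t @^-1` N))) (f z).
  apply: (image_closure_subset cf); exists z => //.
  exact/bz/reindex_continuous.
apply: closureS => _ [w [gw Nw] <-]; split; first exact: generic_image.
by rewrite /= coding_image.
Qed.

Definition code_reindex (p : code_space) : code_space :=
  to_code_space (code_closure_reindex (code_closureP p)).

Lemma code_reindex_continuous : continuous code_reindex.
Proof.
apply: continuous_comp_initial => p.
exact: continuous_comp (val_continuous p) (reindex_continuous (val p)).
Qed.

Lemma decode_code_reindex p : decode (code_reindex p) = f (decode p).
Proof. exact/decodeE/codes_reindex/decodeP. Qed.

End reindexing.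

Section dynamics.
Context {psi psi_inv : Z -> Z} {tau tau_inv : K -> K}.
Hypothesis psi_homeo : homeo_pair psi psi_inv.
Hypothesis preimage_psi_O : forall k, psi @^-1` O k = O (tau k).
Hypothesis tauK : cancel tau tau_inv.
Hypothesis tau_invK : cancel tau_inv tau.

Lemma preimage_psi_inv_O k : psi_inv @^-1` O k = O (tau_inv k).
Proof.
have [_ psi_invK _ _] := psi_homeo.
rewrite -{1}(tau_invK k) -preimage_psi_O; apply/funext => z /=.
by rewrite psi_invK.
Qed.

Definition shift := code_reindex psi_homeo preimage_psi_O.
Definition shift_inv :=
  code_reindex (homeo_pair_sym psi_homeo) preimage_psi_inv_O.

Lemma shift_homeo : homeo_pair shift shift_inv.
Proof.
split; [move=> p | move=> p | exact: code_reindex_continuous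
  | exact: code_reindex_continuous];
  apply: val_inj; apply: functional_extensionality_dep => k /=;
  by rewrite /reindex ?tau_invK ?tauK.
Qed.

Lemma decode_shift : decode \o shift = psi \o decode.
Proof. by apply: funext => p /=; rewrite decode_code_reindex. Qed.

(* [R] only serves to view the code space, a subspace of a countable product,
   as a metric space. *)
Theorem coding_extension (R : realType) (z0 : Z) :
  exists (P : topologicalType) (sigma sigma_inv : P -> P) (pi : P -> Z),
    [/\ [/\ compact [set: P], hausdorff_space P & zero_dimensional P],
        homeo_pair sigma sigma_inv,
        [/\ continuous pi, (forall z : Z, exists p : P, pi p = z)
           & pi \o sigma = psi \o pi],
        (let S := [set p : P | pi @^-1` [set pi p] = [set p]] in
           dense S /\ Gdelta S) &
        ((forall z : Z, ~ open [set z]) -> is_cantor_space P)].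
Proof.
exists code_space, shift, shift_inv, decode; split.
- split; [exact: code_space_compact | exact: code_space_hausdorff
  | exact: code_space_zero_dimensional].
- exact: shift_homeo.
- split; [exact: decode_continuous | exact: decode_surj | exact: decode_shift].
- rewrite /= decode_fiber_set1E.
  by split; [exact: decode_preimage_generic_dense
    | exact: decode_preimage_generic_Gdelta].
- move=> noiso; have [p0 _] := decode_surj z0.
  apply: (@cantor_like_cantor_space R code_space p0).
  by split; [exact: code_space_perfect | exact: code_space_compact
    | exact: code_space_hausdorff | exact: code_space_zero_dimensional].
Qed.

End dynamics.
End coding.

(** * Compact metric spaces *)

Section metric.
Context {R : realType} {Z : topologicalType} {d : Z -> Z -> R}.
Hypothesis d_metric : is_metric_of d.

Definition dball (c : Z) (r : R) := [set y | d c y < r].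

Lemma dball_open c r : open (dball c r).
Proof.
case: d_metric => _ _ _ tri nb.
rewrite openE => y /= dy; apply/nb.
exists (r - d c y); first by rewrite subr_gt0.
move=> y' /= dyy'; have := tri c y y'; rewrite /dball /=; lra.
Qed.

Lemma dball_nbhs c r : 0 < r -> nbhs c (dball c r).
Proof. by case: d_metric => _ _ _ _ nb r0; apply/nb; exists r. Qed.

Lemma closure_dball c r : closure (dball c r) `<=` [set y | d c y <= r].
Proof.
case: d_metric => _ _ sym tri nb y cly /=; rewrite leNgt; apply/negP => ry.
have ny : nbhs y [set y' | d y y' < d c y - r].
  by apply/nb; exists (d c y - r) => //; rewrite subr_gt0.
have [y' [/= cy' yy']] := cly _ ny.
have := tri c y' y; rewrite (sym y' y) /dball /= in cy' yy' *; lra.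
Qed.

Lemma metric_hausdorff : hausdorff_space Z.
Proof.
case: d_metric => ge0 eq0 sym tri nb p q clpq; apply: contrapT => npq.
have dpq : 0 < d p q.
  by rewrite lt_neqAle ge0 andbT; apply/eqP => /esym /eq0.
have [y [/= py qy]] := clpq _ _
  (dball_nbhs p (d p q / 2) ltac:(lra)) (dball_nbhs q (d p q / 2) ltac:(lra)).
have := tri p y q; rewrite (sym y q) /dball /= in py qy *; lra.
Qed.

Lemma metric_finite_net : compact [set: Z] -> forall r, 0 < r ->
  exists s : seq Z, forall z, exists2 c, c \in s & d c z < r.
Proof.
move=> cZ r r0; apply: contrapT => no_net.
have [x clx] : exists x, forall s : seq Z, setT s ->
    closure [set z | forall c, c \in s -> r <= d c z] x.
  apply: (compact_directed_cluster _
    (fun s : seq Z => [set z | forall c, c \in s -> r <= d c z])) => //.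
  - by exists [::].
  - move=> s1 s2 _ _; exists (s1 ++ s2) => // z zs.
    by split => c cs; apply: zs; rewrite mem_cat cs ?orbT.
  - move=> s _; apply: contrapT => far; apply: no_net; exists s => z.
    apply: contrapT => nz; apply: far; exists z => c cs.
    by rewrite leNgt; apply/negP => dcz; apply: nz; exists c.
have [z [/= zfar dxz]] := clx [:: x] I _ (dball_nbhs x r r0).
by have := zfar x (mem_head _ _); rewrite leNgt dxz.
Qed.

Lemma metric_separating_regopen : compact [set: Z] -> Z ->
  exists V : nat * nat -> set Z, (forall j, regopen (V j)) /\
    forall z z', z <> z' -> exists j, V j z /\ ~ closure (V j) z'.
Proof.
move=> cZ z0.
pose r (m : nat) : R := m.+1%:R^-1.
have r_gt0 m : 0 < r m by rewrite invr_gt0.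
have /choice[net netP] : forall m, exists s : seq Z,
    forall z, exists2 c, c \in s & d c z < r m.
  by move=> m; exact: metric_finite_net cZ _ (r_gt0 m).
exists (fun j => (closure (dball (nth z0 (net j.1) j.2) (r j.1)))°); split.
  by move=> j; apply: interior_closed_regopen; exact: closed_closure.
move=> z z' zz'.
have [ge0 eq0 sym tri _] := d_metric.
have dzz' : 0 < d z z'.
  by rewrite lt_neqAle ge0 andbT; apply/eqP => /esym /eq0.
have dzz'2 : 0 < d z z' / 2 by lra.
have [m _ rm] := near_infty_natSinv_lt (PosNum dzz'2).
have {}rm : r m < d z z' / 2 by exact: rm m (leqnn m).
have [c cnet dcz] := netP m z.
exists (m, index c (net m)); rewrite /= nth_index //; split.
  apply: filterS (@subset_closure _ _) _.
  exact: open_nbhs_nbhs (conj (dball_open c (r m)) dcz).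
move=> /(closureS (@interior_subset _ _)).
rewrite -(closure_id _).1; last exact: closed_closure.
move=> /closure_dball /= dcz'.
by have := tri z c z'; rewrite (sym z c); lra.
Qed.

End metric.

Section orbit_pullback.
Context {T : topologicalType} {J : Type} (f g : T -> T) (V : J -> set T).
Hypothesis fg : homeo_pair f g.

Definition orbit_pullback (k : int * J) : set T :=
  iter_int f g k.1 @^-1` V k.2.

Lemma orbit_pullback_regopen k :
  regopen (V k.2) -> regopen (orbit_pullback k).
Proof. exact: regopen_homeo_preimage (homeo_pair_iter_int _ _ k.1 fg). Qed.

Lemma preimage_orbit_pullback k :
  f @^-1` orbit_pullback k = orbit_pullback (k.1 + 1, k.2).
Proof.
have [fK _ _ _] := fg.
by apply/funext => x; rewrite /orbit_pullback /preimage /= iter_int_add1.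
Qed.

End orbit_pullback.

Theorem corollary2p24 (R : realType) (Z : topologicalType) (d : Z -> Z -> R)
  (psi psi_inv : Z -> Z) :
  is_metric_of d ->
  compact [set: Z] ->
  ~ finite_set [set: Z] ->
  homeo_pair psi psi_inv ->
  expansive d psi psi_inv ->
  exists (P : topologicalType) (sigma sigma_inv : P -> P) (pi : P -> Z),
    [/\ [/\ compact [set: P], hausdorff_space P & zero_dimensional P],
        homeo_pair sigma sigma_inv,
        [/\ continuous pi, (forall z : Z, exists p : P, pi p = z)
           & pi \o sigma = psi \o pi],
        (let S := [set p : P | pi @^-1` [set pi p] = [set p]] in
           dense S /\ Gdelta S) &
        ((forall z : Z, ~ open [set z]) -> is_cantor_space P)].
Proof.
move=> d_metric Z_compact Z_infinite psi_homeo _.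
have [z0 _] : [set: Z] !=set0.
  by apply/set0P/eqP => Z0; apply: Z_infinite; rewrite Z0; exact: finite_set0.
have [V [V_regopen V_separates]] :=
  metric_separating_regopen d_metric Z_compact z0.
pose O := orbit_pullback psi psi_inv V.
pose succ (k : int * (nat * nat)) := (k.1 + 1, k.2).
pose pred (k : int * (nat * nat)) := (k.1 - 1, k.2).
have O_regopen k : regopen (O k).
  exact: (orbit_pullback_regopen _ _ _ psi_homeo k (V_regopen k.2)).
have O_separates z z' : z <> z' -> exists k, O k z /\ ~ closure (O k) z'.
  by move=> /V_separates[j]; exists (0, j).
have O_succ k : psi @^-1` O k = O (succ k).
  exact: (preimage_orbit_pullback _ _ V psi_homeo k).
have succK : cancel succ pred by move=> [n j]; rewrite /succ /pred /= addrK.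
have predK : cancel pred succ by move=> [n j]; rewrite /succ /pred /= subrK.
exact: (coding_extension Z_compact (metric_hausdorff d_metric) O_regopen
  O_separates psi_homeo O_succ succK predK R z0).
Qed.
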